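(* Let $k\ge 3$, let $n$ be divisible by $3$, $\mathbf{X}\in\{0,1\}^{n/3\times n/3}$ and $\mu,\upsilon\in\{0,1\}^{n/3}$. Then the number of $k$-cliques in $\mathsf{G}_k^{\mu,\upsilon}(\mathbf{X})$ equals $K_3(G^{\mu,\upsilon}(\mathbf{X}))\cdot(n/3)^{k-3}$, where $K_3(\cdot)$ denotes the number of triangles.
   Context: $G^{\mu,\upsilon}(\mathbf{X})$ is the tripartite graph on vertex sets $U=\{u_1,\dots,u_{n/3}\}$, $Y=\{y_1,\dots,y_{n/3}\}$, $W=\{w_1,\dots,w_{n/3}\}$ whose edges are exactly: $\{u_i,y_j\}$ iff $\mathbf{X}_{i,j}=1$; $\{u_i,w_j\}$ for all $j$ iff $\mu_i=1$; $\{y_i,w_j\}$ for all $j$ iff $\upsilon_i=1$. $\mathsf{G}_k^{\mu,\upsilon}(\mathbf{X})$ has vertex set the disjoint union of $\mathsf{U}=\{\mathsf{u}_1,\dots,\mathsf{u}_{n/3}\}$, $\mathsf{Y}=\{\mathsf{y}_1,\dots,\mathsf{y}_{n/3}\}$ and $\mathsf{W}_p=\{\mathsf{w}_{p,1},\dots,\mathsf{w}_{p,n/3}\}$ for $1\le p\le k-2$, with edges exactly: $\{\mathsf{u}_i,\mathsf{y}_j\}$ iff $\mathbf{X}_{i,j}=1$; $\{\mathsf{u}_i,\mathsf{w}_{p,j}\}$ for all $p,j$ iff $\mu_i=1$; $\{\mathsf{y}_i,\mathsf{w}_{p,j}\}$ for all $p,j$ iff $\upsilon_i=1$; $\{\mathsf{w}_{p,i},\mathsf{w}_{q,j}\}$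 for all $i,j$ and $p\ne q$. A $k$-clique is a set of $k$ pairwise adjacent vertices. *)

From mathcomp Require Import all_boot.
Set Implicit Arguments. Unset Strict Implicit. Unset Printing Implicit Defensive.

Definition is_clique (V : finType) (adj : rel V) (S : {set V}) : bool :=
  [forall x in S, forall y in S, (x != y) ==> adj x y].

Definition num_cliques (V : finType) (adj : rel V) (k : nat) : nat :=
  #|[set S : {set V} | is_clique adj S && (#|S| == k)]|.

(* Small tripartite graph G^{mu,ups}(X) with m = n/3.
   Vertices: (part, index), part 0 = U, 1 = Y, 2 = W. *)
Definition smallV (m : nat) := ('I_3 * 'I_m)%type.

Definition small_adj (m : nat) (X : 'I_m -> 'I_m -> bool) (mu ups : 'I_m -> bool)
  (a b : smallV m) : bool :=
  match nat_of_ord a.1, nat_of_ord b.1 with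
  | 0, 1 => X a.2 b.2
  | 1, 0 => X b.2 a.2
  | 0, 2 => mu a.2
  | 2, 0 => mu b.2
  | 1, 2 => ups a.2
  | 2, 1 => ups b.2
  | _, _ => false
  end.

(* Big graph G_k^{mu,ups}(X): parts inr false = U, inr true = Y,
   inl p = W_{p+1} for p < k-2. *)
Definition bigV (k m : nat) := (('I_(k - 2) + bool) * 'I_m)%type.

Definition big_adj (k m : nat) (X : 'I_m -> 'I_m -> bool) (mu ups : 'I_m -> bool)
  (a b : bigV k m) : bool :=
  match a.1, b.1 with
  | inr false, inr true => X a.2 b.2
  | inr true, inr false => X b.2 a.2
  | inr false, inl _ => mu a.2
  | inl _, inr false => mu b.2
  | inr true, inl _ => ups a.2
  | inl _, inr true => ups b.2
  | inl p, inl q => p != q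
  | _, _ => false
  end.

Arguments big_adj k {m} X mu ups a b.
Arguments small_adj {m} X mu ups a b.

From mathcomp Require Import all_boot zify.

(* Both graphs are multipartite with parts of size m = n/3 and no edges
   inside a part, so a clique with one vertex per part is the graph of a map
   h from the parts to 'I_m.  In both graphs such a map spans a clique exactly
   when (h U, h Y) is an edge u y of X with mu u and ups y, since all W-parts
   are joined to each other.  Hence both clique counts are the number N of
   such pairs times m to the number of remaining parts: N * m ^ (k - 2) for
   the k parts of the big graph and N * m for the three parts of the small
   one. *)

Section MapsPinnedAtTwoPoints.
Variables (P T : finType) (a b : P).
Hypothesis neq_ab : a != b.

Lemma card_ffun_pinned2 (x y : T) :
  #|[set h : {ffun P -> T} | (h a == x) && (h b == y)]| = #|T| ^ (#|P| - 2).
Proof.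
pose F c := if c == a then pred1 x else if c == b then pred1 y else predT.
have neq_ba : (b == a) = false by rewrite eq_sym (negbTE neq_ab).
rewrite cardsE (@eq_card _ _ (family F)) => [|h]; last first.
  apply/andP/familyP => [[/eqP ha /eqP hb] c|hF].
    by rewrite /F; case: eqP => [->|_]; [|case: eqP => [->|_]]; rewrite ?inE ?ha ?hb.
  by move: (hF a) (hF b); rewrite /F neq_ba !eqxx !inE => -> ->.
rewrite card_family foldrE big_map big_enum /=.
rewrite (bigD1 a) // (bigD1 b) /=; last by rewrite neq_ba.
rewrite /F neq_ba !eqxx !card1 !mul1n.
rewrite (eq_bigr (fun=> #|T|)) => [|c /andP[/negbTE-> /negbTE->]]; last exact: eq_card.
rewrite prod_nat_const; congr (_ ^ _).
rewrite [#|P|](cardD1 a) [#|[predD1 _ & a]|](cardD1 b) !inE neq_ba /=.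
rewrite add1n add1n subn2 /=; apply: eq_card => c; rewrite !inE andbT; exact: andbC.
Qed.

Lemma card_ffun_rel2 (Q : rel T) :
  #|[set h : {ffun P -> T} | Q (h a) (h b)]| =
  #|[set p : T * T | Q p.1 p.2]| * #|T| ^ (#|P| - 2).
Proof.
rewrite -sum1dep_card (partition_big (fun h : {ffun P -> T} => (h a, h b))
  (fun p : T * T => Q p.1 p.2)) //= -sum_nat_cond_const.
apply: eq_bigr => -[x y] /= Qxy; rewrite sum1dep_card -(card_ffun_pinned2 x y).
by apply: eq_card => h; rewrite !inE xpair_eqE andb_idl // => /andP[/eqP-> /eqP->].
Qed.

End MapsPinnedAtTwoPoints.

Section TransversalCliques.
Variables (P T : finType) (adj : rel (P * T)).

Definition transversal (h : {ffun P -> T}) : {set P * T} := [set (c, h c) | c : P].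

Lemma transversal_inj : injective transversal.
Proof.
move=> h1 h2 eq_h; apply/ffunP => c.
have : (c, h1 c) \in transversal h2 by rewrite -eq_h imset_f.
by case/imsetP => d _ [-> ->].
Qed.

Lemma card_transversal (h : {ffun P -> T}) : #|transversal h| = #|P|.
Proof. by rewrite card_imset // => c d []. Qed.

Lemma mem_transversal (h : {ffun P -> T}) c i :
  ((c, i) \in transversal h) = (i == h c).
Proof. by apply/imsetP/eqP => [[d _ [-> ->]] | ->]; last exists c. Qed.

Lemma transversal_cliqueP (h : {ffun P -> T}) :
  reflect (forall c d, c != d -> adj (c, h c) (d, h d))
          (is_clique adj (transversal h)).
Proof.
apply: (iffP forall_inP) => [cl c d neq_cd | cl _ /imsetP[c _ ->]].
  have mem_h e : (e, h e) \in transversal h by rewrite mem_transversal.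
  have /(_ (mem_h c))/forall_inP/(_ _ (mem_h d)) := cl (c, h c).
  by rewrite xpair_eqE negb_and neq_cd => /implyP/(_ isT).
apply/forall_inP => _ /imsetP[d _ ->]; apply/implyP => neq.
by apply: cl; apply: contraNneq neq => ->.
Qed.

Hypothesis adj_same_part : forall c i j, adj (c, i) (c, j) = false.

Lemma full_clique_transversal (S : {set P * T}) :
  is_clique adj S -> #|S| = #|P| -> exists h, S = transversal h.
Proof.
move=> /forall_inP cl card_S.
have fst_inj : {in S &, injective fst}.
  move=> [c i] [d j] xS yS /= eq_cd; subst d; apply/eqP/negPn/negP => neq.
  by move/forall_inP: (cl _ xS) => /(_ _ yS); rewrite neq adj_same_part.
have fst_S : fst @: S = [set: P].
  by apply/eqP; rewrite eqEcard subsetT cardsT (card_in_imset fst_inj) card_S leqnn.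
have fst_onto c : exists i, (c, i) \in S.
  have : c \in fst @: S by rewrite fst_S inE.
  by case/imsetP => -[d i] xS ->; exists i.
have [f Sf] := fin_all_exists fst_onto.
exists (finfun f); apply/esym/eqP; rewrite eqEcard card_transversal card_S leqnn andbT.
by apply/subsetP => _ /imsetP[c _ ->]; rewrite ffunE.
Qed.

Lemma num_cliques_transversal :
  num_cliques adj #|P| = #|[set h | is_clique adj (transversal h)]|.
Proof.
rewrite /num_cliques -(card_imset _ transversal_inj); apply: eq_card => S.
rewrite inE; apply/andP/imsetP => [[cl /eqP card_S]|[h]].
  have [h eq_S] := full_clique_transversal S cl card_S.
  by exists h; rewrite // inE -eq_S.
by rewrite inE => cl ->; rewrite card_transversal.
Qed.

End TransversalCliques.

Arguments transversal {P T} h.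
Arguments transversal_cliqueP {P T adj h}.

Section TripartiteGraphs.
Variables (m : nat) (X : 'I_m -> 'I_m -> bool) (mu ups : 'I_m -> bool).

Definition triangle_pair : rel 'I_m := fun u y => [&& X u y, mu u & ups y].

Let partU : 'I_3 := Ordinal (isT : 0 < 3).
Let partY : 'I_3 := Ordinal (isT : 1 < 3).
Let partW : 'I_3 := Ordinal (isT : 2 < 3).

Lemma ord3_cases (c : 'I_3) : [\/ c = partU, c = partY | c = partW].
Proof.
by case: c => -[|[|[|//]]] lt_c; [apply: Or31 | apply: Or32 | apply: Or33]; apply: val_inj.
Qed.

Lemma is_clique_small_transversal (h : {ffun 'I_3 -> 'I_m}) :
  is_clique (small_adj X mu ups) (transversal h) = triangle_pair (h partU) (h partY).
Proof.
apply/transversal_cliqueP/and3P => [cl | [Xuy mu_u ups_y] c d].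
  by move: (cl partU partY isT) (cl partU partW isT) (cl partY partW isT).
by case: (ord3_cases c) (ord3_cases d) => -> [] ->; rewrite /small_adj.
Qed.

Lemma is_clique_big_transversal k (hk : 3 <= k)
    (h : {ffun 'I_(k - 2) + bool -> 'I_m}) :
  is_clique (big_adj k X mu ups) (transversal h) =
  triangle_pair (h (inr false)) (h (inr true)).
Proof.
have w : 'I_(k - 2) by apply: (@Ordinal _ 0); lia.
apply/transversal_cliqueP/and3P => [cl | [Xuy mu_u ups_y] [p|[]] [q|[]] //].
by move: (cl (inr false) (inr true) isT)
  (cl (inr false) (inl w) isT) (cl (inr true) (inl w) isT).
Qed.

Lemma num_cliques_small :
  num_cliques (small_adj X mu ups) 3 =
  #|[set p : 'I_m * 'I_m | triangle_pair p.1 p.2]| * m.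
Proof.
rewrite -[X in num_cliques _ X](card_ord 3) num_cliques_transversal; last first.
  by move=> c i j; case: (ord3_cases c) => ->.
by rewrite (eq_finset _ is_clique_small_transversal) card_ffun_rel2 // !card_ord expn1.
Qed.

Lemma num_cliques_big k (hk : 3 <= k) :
  num_cliques (big_adj k X mu ups) k =
  #|[set p : 'I_m * 'I_m | triangle_pair p.1 p.2]| * m ^ (k - 2).
Proof.
have card_parts : #|{: 'I_(k - 2) + bool}| = k.
  by rewrite card_sum card_ord card_bool; lia.
rewrite -[X in num_cliques _ X]card_parts num_cliques_transversal; last first.
  by move=> [p|[]] i j; rewrite /big_adj /= ?eqxx.
rewrite (eq_finset _ (is_clique_big_transversal k hk)) card_ffun_rel2 //.
by rewrite card_ord card_parts.
Qed.

End TripartiteGraphs.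

Theorem lemma5 (k n : nat) (hk : 3 <= k) (hn : 3 %| n)
  (X : 'I_(n %/ 3) -> 'I_(n %/ 3) -> bool) (mu ups : 'I_(n %/ 3) -> bool) :
  num_cliques (big_adj k X mu ups) k =
  num_cliques (small_adj X mu ups) 3 * (n %/ 3) ^ (k - 3).
Proof.
rewrite num_cliques_big // num_cliques_small -mulnA -expnS.
by congr (_ * _ ^ _); lia.
Qed.
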